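(* Let $G$ be a finite group with $d(G) = 2$. Then $G$ is both $1$-flexible and $2$-flexible if and only if $G \cong p^2$ for a prime $p$, or $G \cong p{:}\langle g\rangle$ for a prime $p$ and an element $g \in \mathrm{GL}_1(p)$ of prime order.
   Context: For a finite group $H$, $d(H)$ denotes the minimal size of a generating set of $H$. For an integer $1 \leq k \leq d(G)$, $G$ is called $k$-flexible if for any $x_1,\dots,x_k \in G$ with $d(\langle x_1,\dots,x_k\rangle)=k$ there exist $x_{k+1},\dots,x_{d(G)} \in G$ such that $\langle x_1,\dots,x_{d(G)}\rangle = G$. Here $p^2$ is the elementary abelian group of order $p^2$, and $p{:}\langle g\rangle$ is the semidirect product of the cyclic group $\mathbb{F}_p$ by $\langle g\rangle \leq \mathrm{GL}_1(p)=\mathbb{F}_p^\times$ acting by multiplication. *)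

From HB Require Import structures.
From mathcomp Require Import all_boot all_order all_algebra all_fingroup all_solvable.
Set Implicit Arguments. Unset Strict Implicit. Unset Printing Implicit Defensive.
Import GRing.Theory.

(* d(A) is MathComp's gen_rank A = 'm(A) (abelian.v): the minimal
   cardinality of a set B with <<B>> = A. *)

Definition flexible (gT : finGroupType) (G : {group gT}) (k : nat) : Prop :=
  forall xs : k.-tuple gT, {subset xs <= G} ->
    gen_rank <<[set:: xs]>>%g = k ->
    exists ys : (gen_rank G - k).-tuple gT,
      {subset ys <= G} /\ <<[set:: xs ++ ys]>>%g = G.

(* The group p:<g> (g in GL_1(p) = units of F_p), realised as the group of
   affine permutations x |-> a x + b of F_p with a in <g>, b in F_p. *)
Definition affine_grp (p : nat) (g : {unit 'F_p}) : {set {perm 'F_p}} :=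
  [set s : {perm 'F_p} | [exists u in <[g]>%g, exists b : 'F_p,
      [forall x : 'F_p, s x == (val u * x + b)%R]]].

(* For d(G) = 2, 1-flexibility says that every nontrivial element lies in a
   generating pair, and 2-flexibility that every proper subgroup is cyclic.
   Noncyclic groups of order p^2 or pq clearly have both properties.
   Conversely, a nontrivial central element lies in a generating pair, so G is
   either abelian, hence elementary abelian of order p^2, or centre-free.  In a
   centre-free G two distinct (cyclic) maximal subgroups generate G, so their
   intersection is central, hence trivial; the class supports of two
   non-conjugate non-normal maximal subgroups would then be disjoint sets of at
   least |G|/2 nontrivial elements each, so some maximal subgroup M is normal.
   Then M has prime order p, G = M<y> with y of prime order acting on M = <a>
   by a |-> a^r, and the action of G on the cosets of <y> identifies G with
   F_p : <r>. *)

From mathcomp Require Import all_boot all_order all_algebra all_fingroup all_solvable.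
From mathcomp Require Import zify ring.
Set Implicit Arguments. Unset Strict Implicit. Unset Printing Implicit Defensive.
Import GRing.Theory.

Local Open Scope group_scope.

Section GenRank.
Variable gT : finGroupType.
Implicit Types (G H : {group gT}) (x y : gT).

Lemma grank_eq0 G : ('m(G) == 0%N) = (G :==: 1).
Proof.
apply/idP/eqP=> [| ->]; last by rewrite -leqn0 -(gen0 gT) -(cards0 gT) grank_min.
have [B <- <-] := grank_witness G.
by rewrite cards_eq0 => /eqP->; rewrite gen0.
Qed.

Lemma grank_le1 G : ('m(G) <= 1) = cyclic G.
Proof.
apply/idP/cyclicP=> [| [x ->]]; last by rewrite -[<[x]>]/<<[set x]>> -(cards1 x) grank_min.
have [B <- <-] := grank_witness G; rewrite leq_eqVlt ltnS leqn0 cards_eq0.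
case/orP=> [/cards1P[x ->] | /eqP->]; first by exists x.
by exists 1; rewrite gen0 cycle1.
Qed.

Lemma grank_cycle x : ('m(<[x]>) == 1%N) = (x != 1).
Proof. by rewrite eqn_leq grank_le1 cycle_cyclic lt0n grank_eq0 cycle_eq1. Qed.

Lemma grank_set2 x y : ('m(<<[set x; y]>>) == 2) = ~~ cyclic <<[set x; y]>>.
Proof.
have le2 : 'm(<<[set x; y]>>) <= 2.
  by apply: leq_trans (grank_min _) _; rewrite cards2; case: (x != y).
by rewrite eqn_leq le2 ltnNge grank_le1.
Qed.

Lemma noncyclic_set2 H : ~~ cyclic H ->
  exists x y, [/\ x \in H, y \in H & ~~ cyclic <<[set x; y]>>].
Proof.
move=> ncH; pose cycH (K : {group gT}) := cyclic K && (K \subset H).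
have cycH1 : cycH 1%G by rewrite /cycH cyclic1 sub1G.
have [C /maxgroupP[/andP[cycC sCH] maxC] _] := maxgroup_exists cycH1.
have [c defC] := cyclicP cycC.
have /subsetPn[h Hh Ch] : ~~ (H \subset C).
  by apply: contra ncH => sHC; have -> : H :=: C by apply/eqP; rewrite eqEsubset sHC.
have Hc : c \in H by rewrite (subsetP sCH) // defC cycle_id.
exists c, h; split=> //; apply: contra Ch => cycCh.
have sChH : <<[set c; h]>> \subset H by rewrite gen_subG subUset !sub1set Hc.
rewrite -(maxC <<[set c; h]>>%G) ?mem_gen ?setU11 ?inE ?eqxx ?orbT //=.
  by rewrite /cycH cycCh.
by rewrite defC cycle_subG mem_gen ?setU11.
Qed.

End GenRank.

Section Flexibility.
Variable gT : finGroupType.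
Implicit Types (G H : {group gT}) (x y : gT).

Definition proper_cyclic G := forall H : {group gT}, H \proper G -> cyclic H.

Definition pair_extendable G :=
  forall x, x \in G -> x != 1 -> exists2 y, y \in G & <<[set x; y]>> = G.

Lemma set_seq1 x : [set:: [:: x]] = [set x].
Proof. by rewrite set_cons set_nil setU0. Qed.

Lemma set_seq2 x y : [set:: [:: x; y]] = [set x; y].
Proof. by rewrite !set_cons set_nil setU0. Qed.

Lemma flexible1P G : 'm(G) = 2 -> flexible G 1 <-> pair_extendable G.
Proof.
move=> mG; rewrite /flexible mG; split=> [flexG x Gx ntx | extG].
  have [|| ys [sysG]] := flexG [tuple x].
  - by move=> u; rewrite inE => /eqP->.
  - by apply/eqP; rewrite /= set_seq1 -/(cycle x) grank_cycle.
  case/tupleP: ys sysG => y ys0; rewrite tuple0 /= set_seq2 => sysG defG.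
  by exists y; rewrite ?sysG ?mem_head.
move=> [s sz] sxG; move: sz sxG; case: s => [//|x [|//]] /= ? sxG.
rewrite set_seq1 -/(cycle x) => /eqP; rewrite grank_cycle => ntx.
have [y Gy defG] := extG x (sxG x (mem_head x [::])) ntx.
by exists [tuple y]; split=> [u | ]; rewrite /= ?set_seq2 // inE => /eqP->.
Qed.

Lemma flexible2P G : 'm(G) = 2 -> flexible G 2 <-> proper_cyclic G.
Proof.
move=> mG; rewrite /flexible mG subnn; split=> [flexG H pHG | cycG].
  apply: contraT => /noncyclic_set2[x [y [Hx Hy ncxy]]].
  have [|| ys [_]] := flexG [tuple x; y].
  - by move=> u; rewrite !inE => /orP[]/eqP->; apply: (subsetP (proper_sub pHG)).
  - by apply/eqP; rewrite /= set_seq2 grank_set2.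
  rewrite (size0nil (size_tuple ys)) cats0 /= set_seq2 => defG.
  by move: pHG; rewrite -defG properE gen_subG subUset !sub1set Hx Hy andbF.
move=> [s sz] sxyG; move: sz sxyG; case: s => [//|x [//|y [|//]]] /= ? sxyG.
rewrite set_seq2 => /eqP; rewrite grank_set2.
move=> ncxy; exists [tuple]; split=> //=; rewrite set_seq2.
have sxy : <<[set x; y]>> \subset G.
  by rewrite gen_subG subUset !sub1set !sxyG ?mem_head ?inE ?eqxx ?orbT.
apply/eqP; rewrite eqEproper sxy /=; apply: contra ncxy => pxy.
exact: (cycG <<[set x; y]>>%G).
Qed.

End Flexibility.

Lemma dvdn_pq_proper p q d : prime p -> prime q ->
  (d %| p * q)%N -> d != (p * q)%N -> d = 1%N \/ prime d.
Proof.
move=> pr_p pr_q; have [/dvdnP[e ->] | p'd] := boolP (p %| d)%N.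
  rewrite [(p * q)%N]mulnC eqn_pmul2r ?dvdn_pmul2r ?prime_gt0 //.
  by move/(primeP pr_q).2/orP=> [] /eqP->; rewrite ?eqxx // mul1n; right.
move=> d_pq _; have d_q : (d %| q)%N.
  by rewrite -(Gauss_dvdr _ (_ : coprime d p)) // coprime_sym prime_coprime.
by case/(primeP pr_q).2/orP: d_q => /eqP->; [left | right].
Qed.

Section OrderPQ.
Variables (gT : finGroupType) (G : {group gT}) (p q : nat).
Hypotheses (pr_p : prime p) (pr_q : prime q) (oG : #|G| = (p * q)%N).

Lemma proper_card_pq (H : {group gT}) : H \proper G -> #|H| = 1%N \/ prime #|H|.
Proof.
move=> pHG; apply: (dvdn_pq_proper pr_p pr_q); rewrite -oG ?cardSg ?proper_sub //.
by rewrite neq_ltn proper_card.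
Qed.

Lemma pq_proper_cyclic : proper_cyclic G.
Proof.
move=> H /proper_card_pq[oH | /prime_cyclic //].
by rewrite (card1_trivg oH) cyclic1.
Qed.

Lemma pq_pair_extendable : ~~ cyclic G -> pair_extendable G.
Proof.
move=> ncG x Gx ntx.
have /properP[_ [y Gy x'y]] : <[x]> \proper G.
  by rewrite properEneq cycle_subG Gx andbT; apply: contraNneq ncG => <-; apply: cycle_cyclic.
exists y => //; set K := <<[set x; y]>>.
have sKG : K \subset G by rewrite gen_subG subUset !sub1set Gx.
have pxK : <[x]> \proper K.
  apply/properP; split; last by exists y; rewrite // mem_gen // !inE eqxx orbT.
  by rewrite cycle_subG mem_gen ?setU11.
apply/eqP; rewrite eqEsubset sKG /=; apply: contraT => G'K.
have pKG : K%G \proper G by rewrite properE sKG.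
have ltxK := proper_card pxK.
have [oK | prK] := proper_card_pq pKG.
  by move: ltxK; rewrite /K oK ltnNge cardG_gt0.
have /(prime_nt_dvdP prK) oxK := cardSg (proper_sub pxK).
by move: ltxK; rewrite oxK ?ltnn // -trivg_card1 cycle_eq1.
Qed.

End OrderPQ.

Section AffineGroup.
Variable p : nat.
Implicit Types (u v : {unit 'F_p}) (b c : 'F_p).

Lemma affine_inj u b : injective (fun x : 'F_p => (val u * x + b)%R).
Proof. by move=> x y /addIr /(mulrI (valP u)). Qed.

Definition affine_perm u b : {perm 'F_p} := perm (@affine_inj u b).

Lemma affine_permE u b x : affine_perm u b x = (val u * x + b)%R.
Proof. by rewrite permE. Qed.

Lemma affine_perm_inj u v b c : affine_perm u b = affine_perm v c -> u = v /\ b = c.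
Proof.
move=> eq_uv; have := congr1 (fun s : {perm 'F_p} => s 0%R) eq_uv.
have := congr1 (fun s : {perm 'F_p} => s 1%R) eq_uv.
rewrite /= !affine_permE !mulr0 !add0r !mulr1 => eq_ub_vc eq_bc.
by move: eq_ub_vc; rewrite eq_bc => /addIr/val_inj.
Qed.

Lemma affine_permM u b v c :
  affine_perm u b * affine_perm v c = affine_perm (u * v) (val v * b + c)%R.
Proof.
apply/permP=> x; rewrite permM !affine_permE FinRing.val_unitM.
by rewrite mulrDr addrA mulrA [(val v * val u)%R]mulrC.
Qed.

Lemma affine_perm1 : affine_perm 1 0%R = 1.
Proof. by apply/permP=> x; rewrite perm1 affine_permE FinRing.val_unit1 mul1r addr0. Qed.

Variable g : {unit 'F_p}.

Lemma affine_grpE :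
  affine_grp g = [set affine_perm ub.1 ub.2 | ub in setX <[g]> [set: 'F_p]].
Proof.
apply/setP=> s; rewrite inE; apply/exists_inP/imsetP=> [[u gu /existsP[b]] | ].
  move/forallP=> sE; exists (u, b); rewrite ?inE ?gu //.
  by apply/permP=> x; rewrite affine_permE; apply/eqP.
case=> -[u b] /setXP[gu _] ->; exists u => //; apply/existsP; exists b.
by apply/forallP=> x; rewrite affine_permE.
Qed.

Lemma affine_perm_in u b : u \in <[g]> -> affine_perm u b \in affine_grp g.
Proof.
move=> gu; rewrite affine_grpE; apply/imsetP; exists (u, b) => //.
by rewrite inE gu inE.
Qed.

Lemma affine_grp_group_set : group_set (affine_grp g).
Proof.
rewrite affine_grpE; apply/group_setP; split.
  by rewrite -affine_perm1 -affine_grpE affine_perm_in.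
move=> _ _ /imsetP[[u b] /setXP[gu _] ->] /imsetP[[v c] /setXP[gv _] ->] /=.
by rewrite affine_permM -affine_grpE affine_perm_in ?groupM.
Qed.

Canonical affine_group := Group affine_grp_group_set.

Lemma card_affine_grp : prime p -> #|affine_grp g| = (#[g] * p)%N.
Proof.
move=> pr_p; rewrite affine_grpE card_in_imset ?cardsX ?cardsT ?card_Fp //.
by move=> [u b] [v c] _ _ /= /affine_perm_inj[-> ->].
Qed.

End AffineGroup.

Section AffineModel.
Variables (gT : finGroupType) (G : {group gT}) (p r : nat) (a y : gT).
Hypotheses (pr_p : prime p) (oa : #[a] = p) (pr_y : prime #[y]).
Hypotheses (tiYA : <[y]> :&: <[a]> = 1) (defG : <[y]> * <[a]> = G).
Hypotheses (aJy : a ^ y = a ^+ r) (ncay : ~ commute a y).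

Local Notation F := 'F_p.

Lemma expa_eqF m n : (a ^+ m == a ^+ n) = (m%:R == n%:R :> F)%R.
Proof. by rewrite eq_expg_mod_order oa -val_eqE /= !val_Fp_nat. Qed.

Lemma conjXaXy j k : (a ^+ k) ^ (y ^+ j) = a ^+ (k * r ^ j).
Proof.
elim: j => [|j IHj]; first by rewrite conjg1 expn0 muln1.
by rewrite expgSr conjgM IHj conjXg aJy -expgM expnS mulnCA.
Qed.

Lemma mem_yXaX h : h \in G -> exists j c, h = y ^+ j * a ^+ c.
Proof. by rewrite -defG => /mulsgP[_ _ /cycleP[j ->] /cycleP[c ->] ->]; exists j, c. Qed.

Lemma mulyXaX j1 c1 j2 c2 :
  y ^+ j1 * a ^+ c1 * (y ^+ j2 * a ^+ c2) = y ^+ (j1 + j2) * a ^+ (c1 * r ^ j2 + c2).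
Proof.
rewrite mulgA -(mulgA _ (a ^+ c1) (y ^+ j2)) (conjgC (a ^+ c1)) conjXaXy.
by rewrite !mulgA -expgD -mulgA -expgD.
Qed.

Definition dlog (h : gT) : F := odflt 0%R [pick k : F | a ^+ k == h].

Lemma dlogX m : dlog (a ^+ m) = m%:R%R.
Proof.
rewrite /dlog; case: pickP => [k | /(_ m%:R%R)] /=; rewrite expa_eqF natr_Zp.
  by rewrite eq_sym => /eqP.
by rewrite eqxx.
Qed.

(* The right cosets of <[y]> are represented by the powers a ^+ k, k : 'F_p. *)
Definition coset_act (h : gT) (k : F) : F := dlog (remgr <[y]> <[a]> (a ^+ k * h)).

Lemma coset_actE j c (k : F) :
  coset_act (y ^+ j * a ^+ c) k = (k * r%:R ^+ j + c%:R)%R.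
Proof.
rewrite /coset_act -[a ^+ k]mul1g -(expg0 y) mulyXaX remgrMid ?mem_cycle // dlogX.
by rewrite natrD natrM natrX natr_Zp.
Qed.

Lemma r_unit : (r%:R : F)%R \is a GRing.unit.
Proof.
rewrite unitfE -[0%R](mulr0n (1 : F)) -expa_eqF -aJy expg0 conjg_eq1.
by rewrite -order_gt1 oa prime_gt1.
Qed.

Let g : {unit F} := FinRing.Unit r_unit.

Lemma order_r_unit : #[g] = #[y].
Proof.
have gy1 : g ^+ #[y] = 1.
  apply: val_inj; rewrite FinRing.val_unitX /= -natrX -[1%R](mulr1n (1 : F)).
  by apply/eqP; rewrite -expa_eqF -[(r ^ _)%N]mul1n -conjXaXy expg_order conjg1.
have ntg : g != 1.
  apply: contra_not_neq ncay => /(congr1 val) /= r1; apply/commgP/conjg_fixP.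
  by rewrite aJy; apply/eqP; rewrite -[a in _ == a]expg1 expa_eqF r1.
have /(prime_nt_dvdP pr_y) -> // : (#[g] %| #[y])%N by rewrite order_dvdn gy1.
by rewrite order_eq1.
Qed.

Lemma coset_act_inj h : h \in G -> injective (coset_act h).
Proof.
case/mem_yXaX=> j [c ->] k1 k2; rewrite !coset_actE => /addIr/mulIr; apply.
by rewrite unitrX ?r_unit.
Qed.

Definition coset_act_perm h : {perm F} :=
  if h \in G =P true is ReflectT Gh then perm (coset_act_inj Gh) else 1.

Lemma coset_act_permE h k : h \in G -> coset_act_perm h k = coset_act h k.
Proof. by rewrite /coset_act_perm; case: eqP => // Gh _; rewrite permE. Qed.

Lemma coset_act_permM : {in G &, {morph coset_act_perm : h1 h2 / h1 * h2}}.
Proof.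
move=> h1 h2 Gh1 Gh2; apply/permP=> k; rewrite permM !coset_act_permE ?groupM //.
have [j1 [c1 ->]] := mem_yXaX Gh1; have [j2 [c2 ->]] := mem_yXaX Gh2.
rewrite mulyXaX !coset_actE natrD natrM natrX exprD.
ring.
Qed.

Canonical coset_act_morphism := Morphism coset_act_permM.

Lemma injm_coset_act : 'injm coset_act_morphism.
Proof.
apply/subsetP=> h /morphpreP[Gh /set1P/permP fix_h]; rewrite inE.
have [j [c defh]] := mem_yXaX Gh; have := fix_h 0%R; have := fix_h 1%R.
rewrite /= !coset_act_permE // defh !coset_actE !perm1 mul0r add0r mul1r => + c0.
rewrite c0 addr0 => rj1; move/eqP: c0; rewrite -[0%R](mulr0n (1 : F)).
rewrite -expa_eqF expg0 => /eqP->; rewrite mulg1.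
rewrite -order_dvdn -order_r_unit order_dvdn; apply/eqP/val_inj.
by rewrite FinRing.val_unitX.
Qed.

Lemma isog_affine_grp : exists g : {unit F}, prime #[g] /\ G \isog affine_grp g.
Proof.
exists g; rewrite order_r_unit; split=> //; apply/isogP; exists coset_act_morphism.
  exact: injm_coset_act.
apply/eqP; rewrite eqEcard (card_injm injm_coset_act) // card_affine_grp //.
have oG : #|G| = (#[y] * p)%N by rewrite -defG TI_cardMg // -oa.
rewrite order_r_unit oG leqnn andbT morphimEdom.
apply/subsetP=> _ /imsetP[h Gh ->]; have [j [c defh]] := mem_yXaX Gh.
have -> : coset_act_morphism h = affine_perm (g ^+ j) c%:R%R.
  apply/permP=> k; rewrite affine_permE coset_act_permE // defh coset_actE.
  by rewrite FinRing.val_unitX mulrC.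
by rewrite affine_perm_in ?mem_cycle.
Qed.

End AffineModel.

Section ElementaryAbelianSquare.
Variable p : nat.
Hypothesis pr_p : prime p.

Lemma card_Zp_sq : #|[set: 'Z_p * 'Z_p]| = (p ^ 2)%N.
Proof. by rewrite cardsT card_prod card_ord Zp_cast ?prime_gt1 // mulnn. Qed.

Lemma abelem_Zp_sq : p.-abelem [set: 'Z_p * 'Z_p].
Proof.
apply/abelemP=> //; split=> [|[x1 x2] _].
  by apply/centsP=> -[u1 u2] _ [v1 v2] _; congr pair; apply: addrC.
have expgE n : (x1, x2) ^+ n = (x1 ^+ n, x2 ^+ n) by elim: n => // n IHn; rewrite !expgS IHn.
have expZp (z : 'Z_p) : z ^+ p = 1.
  by have := expg_cardG (in_setT z); rewrite cardsT card_ord Zp_cast ?prime_gt1.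
by rewrite expgE !expZp.
Qed.

End ElementaryAbelianSquare.

Section ProperSubgroupsCyclic.
Variable gT : finGroupType.
Implicit Types (G H K M : {group gT}) (x y : gT).

Lemma pair_extendable_abelian G : pair_extendable G -> 'Z(G) != 1 -> abelian G.
Proof.
move=> extG /trivgPn[z /centerP[Gz cGz] ntz]; have [y Gy <-] := extG z Gz ntz.
rewrite abelian_gen abelianE subUset !sub1set centU !cent_set1 !in_setI !cent1id.
have /cent1P zCy := cGz y Gy.
by rewrite zCy cent1C zCy.
Qed.

Lemma abelian_proper_cyclic_isog G : proper_cyclic G -> ~~ cyclic G -> abelian G ->
  exists p, prime p /\ G \isog [set: 'Z_p * 'Z_p].
Proof.
move=> cycG ncG cGG; have [p pr_p rG] := rank_witness G.
have : 1 < 'r_p(G) by rewrite -rG ltnNge -abelian_rank1_cyclic.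
case/p_rank_geP=> E /pnElemPcard[sEG abelE oE].
have ncE : ~~ cyclic E by rewrite (abelem_cyclic abelE) oE pfactorK.
have defE : E :=: G.
  by apply/eqP; rewrite eqEproper sEG; apply: contra ncE => /cycG.
exists p; split=> //; rewrite -defE (isog_abelem_card _ abelE) abelem_Zp_sq //.
by rewrite /= card_Zp_sq // oE.
Qed.

Lemma maximal_joingE G M K :
  maximal M G -> K \subset G -> ~~ (K \subset M) -> M <*> K = G.
Proof.
case/maxgroupP=> pMG maxM sKG K'M; apply/eqP; rewrite eqEproper join_subG sKG.
rewrite proper_sub //=; apply: contra K'M => /maxM <-; last exact: joing_subl.
exact: joing_subr.
Qed.

Lemma abelian_setI_sub_center M K :
  abelian M -> abelian K -> M :&: K \subset 'Z(M <*> K).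
Proof.
move=> cMM cKK; apply/subsetP=> z /setIP[Mz Kz].
rewrite inE mem_gen ?inE ?Mz // -sub_cent1 join_subG !sub_cent1.
by rewrite (subsetP cMM) ?(subsetP cKK).
Qed.

Lemma maximal_of_elt G x : ~~ cyclic G -> x \in G -> exists2 M : {group gT}, maximal M G & x \in M.
Proof.
move=> ncG; rewrite -cycle_subG => /maximal_exists[defG | [M maxM]].
  by rewrite -defG cycle_cyclic in ncG.
by rewrite cycle_subG; exists M.
Qed.

Lemma class_support_sub G M : M \subset G -> class_support M^# G \subset G^#.
Proof.
move=> sMG; apply/subsetP=> _ /imset2P[u g /setD1P[ntu Mu] Gg ->].
by rewrite !inE conjg_eq1 ntu groupJ // (subsetP sMG).
Qed.

Section CenterFree.
Variable G : {group gT}.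
Hypotheses (cycG : proper_cyclic G) (ZG1 : 'Z(G) = 1).

Lemma maximal_TI M K : maximal M G -> maximal K G -> M :!=: K -> M :&: K = 1.
Proof.
move=> maxM maxK neMK; have [pMG _] := maxgroupP maxM; have [pKG maxK'] := maxgroupP maxK.
have K'M : ~~ (K \subset M) by apply: contra neMK => /(maxK' _ pMG) ->.
apply/trivgP; rewrite -ZG1 -(maximal_joingE maxM (proper_sub pKG) K'M).
by apply: abelian_setI_sub_center; apply/cyclic_abelian/cycG.
Qed.

Lemma maximalJ_in M g : g \in G -> maximal M G -> maximal (M :^ g)%G G.
Proof. by move=> Gg; rewrite -{2}(conjGid Gg) /= maximalJ. Qed.

Lemma maximal_normedTI M : maximal M G -> ~~ (M <| G) -> M :!=: 1 ->
  normedTI M^# G M.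
Proof.
move=> maxM nnM ntM; have [pMG maxM'] := maxgroupP maxM.
have sMG := proper_sub pMG.
have defN : 'N_G(M) = M.
  apply: maxM'; last by rewrite subsetI sMG normG.
  rewrite properEneq subsetIl andbT; apply: contraNneq nnM => eqNG.
  by rewrite /normal sMG -eqNG subsetIr.
apply/normedTI_memJ_P; split=> //.
  by have [x Mx ntx] := trivgPn _ ntM; apply/set0Pn; exists x; rewrite !inE ntx.
move=> x g /setD1P[ntx Mx] Gg; rewrite !inE conjg_eq1 ntx /=.
apply/idP/idP=> [Mxg | Mg]; last by rewrite groupJ.
apply: contraT => M'g; have neM : M :!=: M :^ g.
  by apply: contra M'g => /eqP defMg; rewrite -defN inE Gg; apply/normP.
have /setP/(_ (x ^ g)) := maximal_TI maxM (maximalJ_in Gg maxM) neM.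
by rewrite !inE Mxg memJ_conjg Mx conjg_eq1 (negPf ntx).
Qed.

(* M^# is a TI-set with normaliser M, so its class support has
   (|M| - 1) |G : M| = |G| - |G : M| elements. *)
Lemma card_class_support_maximal_bounds M : maximal M G -> ~~ (M <| G) -> M :!=: 1 ->
  #|G| <= (#|class_support M^# G|).*2 /\ #|class_support M^# G| < #|G^#|.
Proof.
move=> maxM nnM ntM; have /andP[sMG G'M] := maxgroupp maxM.
have iM : 1 < #|G : M| by rewrite indexg_gt1.
have oM : 1 < #|M| by rewrite cardG_gt1.
move: iM oM (Lagrange sMG).
rewrite (card_support_normedTI (maximal_normedTI maxM nnM ntM)).
rewrite (cardsD1 1 G) (cardsD1 1 M) !group1 -muln2 /=.
move: #|M^#| #|G : M| #|G^#| => m i n iM oM defG; split; nia.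
Qed.

Lemma class_support_maximal_disjoint M K x :
  maximal M G -> maximal K G -> x \in K^# -> x \notin class_support M^# G ->
  [disjoint class_support M^# G & class_support K^# G].
Proof.
move=> maxM maxK Kx M'x; apply/pred0P=> z /=; apply/negP=> /andP[].
case/imset2P=> u g /setD1P[ntu Mu] Gg -> /imset2P[v h /setD1P[_ Kv] Gh uv].
have eqMK : M :^ g = K :^ h.
  apply: contraPeq isT => neMK.
  have /setP/(_ (u ^ g)) := maximal_TI (maximalJ_in Gg maxM) (maximalJ_in Gh maxK) neMK.
  by rewrite !inE memJ_conjg Mu uv memJ_conjg Kv -uv conjg_eq1 (negPf ntu).
case/negP: M'x; rewrite -[x](conjgK (h * g^-1)) memJ_class_support ?groupV ?groupM ?groupV //.
case/setD1P: Kx => ntx Kx; rewrite !inE conjg_eq1 ntx conjgM -mem_conjg eqMK.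
by rewrite memJ_conjg.
Qed.

Lemma exists_normal_maximal : ~~ cyclic G -> exists2 M : {group gT}, maximal M G & M <| G.
Proof.
move=> ncG; pose P := [exists (M : {group gT} | maximal M G), M <| G].
have [/exists_inP[M maxM nMG] | /exists_inP nnG] := boolP P; first by exists M.
have maximal_class_support x : x \in G^# -> exists2 M : {group gT}, maximal M G &
    [/\ x \in M^#, class_support M^# G \subset G^#
      & #|G| <= (#|class_support M^# G|).*2 /\ #|class_support M^# G| < #|G^#|].
  case/setD1P=> ntx Gx; have [M maxM Mx] := maximal_of_elt ncG Gx.
  have nnM : ~~ (M <| G) by apply/negP=> nMG; apply: nnG; exists M.
  have ntM : M :!=: 1 by apply/trivgPn; exists x.
  exists M; rewrite // !inE ntx Mx class_support_sub ?proper_sub ?(maxgroupp maxM) //.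
  by split; last exact: card_class_support_maximal_bounds.
have [x1 Gx1] : exists x1, x1 \in G^#.
  by apply/set0Pn; rewrite setD_eq0 subG1; apply: contra ncG => /eqP->; apply: cyclic1.
have [M1 maxM1 [_ sS1G [leGS1 ltS1G]]] := maximal_class_support x1 Gx1.
have /subsetPn[x2 Gx2 S1'x2] : ~~ (G^# \subset class_support M1^# G).
  by apply: contraL ltS1G => /subset_leq_card; rewrite leqNgt.
have [M2 maxM2 [M2x2 sS2G [leGS2 _]]] := maximal_class_support x2 Gx2.
have := subset_leq_card (introT subUsetP (conj sS1G sS2G)).
rewrite cardsU (disjoint_setI0 (class_support_maximal_disjoint maxM1 maxM2 M2x2 S1'x2)).
rewrite cards0 subn0 => leS12; exfalso; move: leGS1 leGS2 leS12.
rewrite (cardsD1 1 G) group1 -!muln2.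
move: #|class_support M1^# G| #|class_support M2^# G| #|G^#| => s1 s2 n; lia.
Qed.

Lemma maximal_normal_complement M : maximal M G -> M <| G ->
  exists y, [/\ prime #[y], M :&: <[y]> = 1 & M * <[y]> = G].
Proof.
move=> maxM nMG; have pMG := maxgroupp maxM; have [_ [y0 Gy0 M'y0]] := properP pMG.
have tiMy0 : M :&: <[y0]> = 1.
  apply/trivgP; rewrite -ZG1 -(maximal_joingE maxM (_ : <[y0]> \subset G)) ?cycle_subG //.
  by apply: abelian_setI_sub_center (cycle_abelian y0); exact/cyclic_abelian/cycG.
have y0_gt1 : 1 < #[y0] by rewrite order_gt1; apply: contraNneq M'y0 => ->.
have [y y0y oy] := Cauchy (pdiv_prime y0_gt1) (pdiv_dvd #[y0]).
have pr_y : prime #[y] by rewrite oy pdiv_prime.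
have tiMy : M :&: <[y]> = 1 by apply/trivgP; rewrite -tiMy0 setIS ?cycle_subG.
exists y; split=> //; apply: mulg_normal_maximal => //.
  by rewrite cycle_subG (subsetP _ y y0y) ?cycle_subG.
by apply: contraTN pr_y => /setIidPr syM; rewrite orderE -syM tiMy cards1.
Qed.

Lemma commute_maximal_normal_eq1 M y a : maximal M G -> M <| G -> M * <[y]> = G ->
  a \in M -> commute a y -> a = 1.
Proof.
move=> maxM nMG defG Ma cay; suff : a \in 'Z(G) by rewrite ZG1 => /set1P.
have sMG := proper_sub (maxgroupp maxM); have cMM := cyclic_abelian (cycG (maxgroupp maxM)).
have nMy : <[y]> \subset 'N(M) by rewrite (subset_trans _ (normal_norm nMG)) // -defG mulG_subr.
rewrite inE (subsetP sMG) //= -sub_cent1 -defG -norm_joinEr // join_subG sub_cent1.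
by rewrite (subsetP cMM) //= cycle_subG; apply/cent1P.
Qed.

(* An element a of prime order in M: if <[a]> were smaller than M, then
   <[a]> <*> <[y]> would be proper, hence cyclic, and a would commute with y. *)
Lemma maximal_normal_prime M : ~~ cyclic G -> maximal M G -> M <| G -> prime #|M|.
Proof.
move=> ncG maxM nMG; have [y [pr_y tiMy defG]] := maximal_normal_complement maxM nMG.
have sMG := proper_sub (maxgroupp maxM); have cycM := cycG (maxgroupp maxM).
have Gy : y \in G by rewrite -defG (subsetP (mulG_subr _ _)) ?cycle_id.
have ntM : M :!=: 1 by apply: contra ncG => /eqP M1; rewrite -defG M1 mul1g cycle_cyclic.
have M_gt1 : 1 < #|M| by rewrite cardG_gt1.
have [a Ma oa] := Cauchy (pdiv_prime M_gt1) (pdiv_dvd #|M|).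
have pr_a : prime #[a] by rewrite oa pdiv_prime.
have nAy : <[y]> \subset 'N(<[a]>).
  have [m defM] := cyclicP cycM; have nAG : <[a]> <| G.
    by apply: char_normal_trans nMG; rewrite defM cycle_subgroup_char // -defM cycle_subG.
  by rewrite cycle_subG (subsetP (normal_norm nAG)).
suff defA : <[a]> = M by rewrite -defA.
apply/eqP; rewrite eqEcard cycle_subG Ma /= leqNgt; apply/negP => ltaM.
have pK : <[a]> <*> <[y]> \proper G.
  rewrite properEcard join_subG !cycle_subG Gy (subsetP sMG) //= norm_joinEr //.
  have tiAy : <[a]> :&: <[y]> = 1 by apply/trivgP; rewrite -tiMy setSI ?cycle_subG.
  by rewrite -defG !TI_cardMg // ltn_pmul2r ?cardG_gt0.
have cay : commute a y.
  by apply: (centsP (cyclic_abelian (cycG pK))); rewrite ?mem_gen // inE cycle_id ?orbT.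
by move: pr_a; rewrite (commute_maximal_normal_eq1 maxM nMG defG Ma cay) order1.
Qed.

Lemma maximal_normal_affine M : ~~ cyclic G -> maximal M G -> M <| G ->
  exists p (g : {unit 'F_p}), prime p /\ prime #[g] /\ G \isog affine_grp g.
Proof.
move=> ncG maxM nMG; have pr_M := maximal_normal_prime ncG maxM nMG.
have [y [pr_y tiMy defG]] := maximal_normal_complement maxM nMG.
have [a defM] := cyclicP (cycG (maxgroupp maxM)).
have nMy : <[y]> \subset 'N(M).
  by rewrite (subset_trans _ (normal_norm nMG)) // -defG mulG_subr.
have [r aJy] : exists r, a ^ y = a ^+ r.
  by apply/cycleP; rewrite memJ_norm ?cycle_id // -defM -cycle_subG.
have Ma : a \in M by rewrite defM cycle_id.
have ncay : ~ commute a y.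
  move/(commute_maximal_normal_eq1 maxM nMG defG Ma) => a1.
  by move: pr_M; rewrite defM a1 cycle1 cards1.
have oa : #[a] = #|M| by rewrite defM.
have tiYA : <[y]> :&: <[a]> = 1 by rewrite -defM setIC.
have defYA : <[y]> * <[a]> = G by rewrite -defM (normC nMy).
have [g [pr_g isoG]] := isog_affine_grp pr_M oa pr_y tiYA defYA aJy ncay.
by exists #|M|, g.
Qed.

End CenterFree.

End ProperSubgroupsCyclic.

Theorem lemma2p8 (gT : finGroupType) (G : {group gT}) :
  gen_rank G = 2 ->
  ((flexible G 1 /\ flexible G 2) <->
   ((exists p : nat, prime p /\ G \isog [set: 'Z_p * 'Z_p]) \/
    (exists (p : nat) (g : {unit 'F_p}),
       prime p /\ prime #[g]%g /\ G \isog affine_grp g))).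
Proof.
move=> mG; have ncG : ~~ cyclic G by rewrite -grank_le1 mG.
rewrite (flexible1P mG) (flexible2P mG); split=> [[extG cycG] | ].
  have [ntZ | /negbNE/eqP ZG1] := boolP ('Z(G) != 1).
    by left; apply: abelian_proper_cyclic_isog; rewrite ?pair_extendable_abelian.
  have [M maxM nMG] := exists_normal_maximal cycG ZG1 ncG.
  by right; apply: maximal_normal_affine nMG.
have flex_pq p q : prime p -> prime q -> #|G| = (p * q)%N ->
    pair_extendable G /\ proper_cyclic G.
  move=> pr_p pr_q oG; split; first exact: pq_pair_extendable oG ncG.
  exact: pq_proper_cyclic oG.
case=> [[p [pr_p /card_isog oG]] | [p [g [pr_p [pr_g /card_isog oG]]]]].
  by apply: (flex_pq p p); rewrite // oG card_Zp_sq.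
by apply: (flex_pq p #[g]); rewrite // oG card_affine_grp // mulnC.
Qed.
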